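(* If $T$ is a subcubic tree, then $\gamma_e(T)=\gamma_{e,f}^*(T)$ if and only if $T$ is $K_{1,3}$.
   Context: All graphs are finite, simple and undirected; subcubic means maximum degree at most $3$; $K_{1,3}$ is the star with three leaves. For a graph $G$ and $D\subseteq V(G)$, and vertices $u,v$, let $\mathrm{dist}_{(G,D)}(u,v)$ be the minimum number of edges of a path $P$ in $G$ between $u$ and $v$ such that $D$ contains exactly one endvertex of $P$ and no internal vertex of $P$ ($\infty$ if no such path exists; in particular $\mathrm{dist}_{(G,D)}(u,u)=0$ for $u\in D$). Let $w_{(G,D)}(u)=\sum_{v\in D}\left(\frac12\right)^{\mathrm{dist}_{(G,D)}(u,v)-1}$ with $\left(\frac12\right)^\infty=0$. $D$ is an exponential dominating set if $w_{(G,D)}(u)\ge 1$ for every $u\in V(G)$, and $\gamma_e(G)$ is the minimum size of an exponential dominating set. The fractional porous exponential domination number $\gamma_{e,f}^*(G)$ is the optimum value of the linear program: minimize $\sum_{u\in V(G)}x(u)$ subject to $\sum_{u\in V(G)}\left(\frac12\right)^{\mathrm{dist}_G(u,v)-1}x(u)\ge 1$ for every $v\in V(G)$ and $x\ge 0$, where $\mathrm{dist}_G$ is the usual distance. *)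

(* Simple graphs: symmetric irreflexive relation e on a finType T. *)
From HB Require Import structures.
From mathcomp Require Import all_boot all_order all_algebra.
Set Implicit Arguments. Unset Strict Implicit. Unset Printing Implicit Defensive.
Import Order.TTheory GRing.Theory Num.Theory.

Section Defs.
Variables (T : finType) (e : rel T).

Definition is_cycle (x : T) (p : seq T) : bool :=
  [&& path e x p, uniq (x :: p), 2 <= size p & e (last x p) x].

Definition is_tree : Prop :=
  0 < #|T| /\ (forall x y, connect e x y) /\ (forall x p, ~~ is_cycle x p).

Definition subcubic : Prop := forall x, #|[set y | e x y]| <= 3.

Definition isK13 : Prop :=
  #|T| = 4 /\ exists c : T, forall x y,
    e x y = ((x == c) && (y != c)) || ((y == c) && (x != c)).

(* usual distance: a walk of length k from u to v exists; minimal such k.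
   A shortest walk is a path, so its length is < #|T| when it exists. *)
Definition walk_len (u v : T) (k : nat) : bool :=
  [exists p : k.-tuple T, path e u p && (last u p == v)].

Definition distG (u v : T) : option nat :=
  let s := iota 0 #|T| in
  if has (walk_len u v) s then Some (find (walk_len u v) s) else None.

Definition Dpath_len (D : {set T}) (u v : T) (k : nat) : bool :=
  [exists p : k.-tuple T,
    [&& path e u p, last u p == v, uniq (u :: p),
        #|[set u; v] :&: D| == 1 &
        all (fun x => x \notin D) (behead (belast u p))]].

Definition distGD (D : {set T}) (u v : T) : option nat :=
  let s := iota 0 #|T| in
  if has (Dpath_len D u v) s then Some (find (Dpath_len D u v) s) else None.

(* (1/2)^(d-1) = 2 / 2^d, and (1/2)^infty = 0 *)
Definition halfpow (R : numFieldType) (d : option nat) : R :=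
  match d with Some k => 2%:R / (2%:R ^+ k) | None => 0 end.

Definition wGD (D : {set T}) (u : T) : rat :=
  (\sum_(v in D) halfpow rat (distGD D u v))%R.

Definition exp_dominating (D : {set T}) : bool :=
  [forall u, (1 <= wGD D u)%R].

(* minimum size of an exponential dominating set (setT is one, so the
   minimum is < #|T|.+1) *)
Definition gamma_e : nat :=
  find (fun k => [exists D : {set T}, (#|D| == k) && exp_dominating D])
       (iota 0 #|T|.+1).

Definition fpe_feasible (R : realFieldType) (x : T -> R) : Prop :=
  (forall u, (0 <= x u)%R) /\
  (forall v, (1 <= \sum_u halfpow R (distG u v) * x u)%R).

Definition is_fpe_opt (R : realFieldType) (val : R) : Prop :=
  (exists x, fpe_feasible x /\ (\sum_u x u)%R = val) /\
  (forall x, fpe_feasible x -> (val <= \sum_u x u)%R).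

End Defs.

From HB Require Import structures.
From mathcomp Require Import all_boot all_order all_algebra.
From mathcomp Require Import zify ring lra.
Set Implicit Arguments. Unset Strict Implicit. Unset Printing Implicit Defensive.
Import Order.TTheory GRing.Theory Num.Theory.

(* Root a tree at any vertex r and count each edge from its lower end: this
   gives \sum_v (3 - deg v) 2^-d(r,v) = 3.  Hence y v = (3 - deg v)/6, which is
   nonnegative on subcubic trees, is a feasible LP solution and, the LP being
   symmetric, also a dual certificate; the optimum is \sum_v y v = (n + 2)/6.
   If an exponential dominating set D had size (n + 2)/6, complementary
   slackness would force every vertex v of degree at most 2 to receive weight
   exactly 1, each u in D being seen from v at its ordinary distance.  All
   vertices of D then have degree 3, and if D had two vertices u1, u2, a leaf
   beyond u1 seen from u2 would be blocked by u1.  So D = {c}, n = 4 and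
   deg c = 3, i.e. the tree is K_{1,3}; conversely the centre of K_{1,3}
   dominates and the optimum is 1. *)

Lemma last_take_nth (T : Type) (x : T) s j :
  j <= size s -> last x (take j s) = nth x (x :: s) j.
Proof.
elim: s x j => [|a s IH] x [|j] //= js.
by rewrite IH // (set_nth_default x).
Qed.

Lemma mem_behead_belast (T : eqType) (x z : T) p :
  z \in x :: p -> z != x -> z != last x p -> z \in behead (belast x p).
Proof.
case/lastP: p => [|p y] /=; first by rewrite inE => /eqP ->; rewrite eqxx.
rewrite last_rcons belast_rcons /= inE mem_rcons inE.
by case/orP=> [->|/orP[->|]].
Qed.

Lemma halfpow_ge0 (R : realFieldType) d : (0 <= halfpow R d)%R.
Proof. by case: d => [k|] //=; rewrite divr_ge0 ?exprn_ge0 ?ler0n. Qed.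

Lemma find_iota_first (P : pred nat) N k :
  k < N -> P k -> (forall j, j < k -> ~~ P j) ->
  has P (iota 0 N) && (find P (iota 0 N) == k).
Proof.
move=> kN Pk Pj.
have -> : iota 0 N = iota 0 k ++ k :: iota k.+1 (N - k.+1).
  by rewrite -[in LHS](subnKC kN) addSnnS iotaD.
have hk : has P (iota 0 k) = false.
  by apply/hasPn => j; rewrite mem_iota => /andP[_ /Pj].
by rewrite has_cat hk /= Pk find_cat hk /= Pk size_iota addn0 eqxx.
Qed.

Section Trees.
Variables (T : finType) (e : rel T).
Hypothesis esym : symmetric e.
Hypothesis eirr : irreflexive e.
Hypothesis acyclic : forall x p, ~~ is_cycle e x p.

(* Otherwise the two paths, from x up to their first common vertex, would
   close up into a cycle. *)
Lemma upaths_head_eq x p q :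
  path e x p -> path e x q -> uniq (x :: p) -> uniq (x :: q) ->
  last x p = last x q -> p != [::] -> q != [::] -> head x p = head x q.
Proof.
move=> pp pq up uq lpq p0 q0; apply/eqP/negPn/negP => hpq.
have hasq : has (mem q) p.
  apply/hasP; exists (last x p).
    by case: p p0 {pp up lpq hpq} => // a p' _ /=; exact: mem_last.
  by rewrite lpq; case: q q0 {pq uq lpq hpq} => // b q' _ /=; exact: mem_last.
set i := find (mem q) p; set w := nth x p i; set k := index w q.
have ip : i < size p by rewrite -has_find.
have wq : w \in q := nth_find x hasq.
have kq : k < size q by rewrite index_mem.
have [xNp up'] := andP up; have [xNq uq'] := andP uq.
have ltw : last x (take i.+1 p) = w by rewrite (take_nth x ip) last_rcons.
have revq : path e w (rcons (rev (take k q)) x).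
  have wqk : nth x q k = w by rewrite nth_index.
  have : path e x (rcons (take k q) w) by rewrite -wqk -take_nth // take_path.
  rewrite -rev_path last_rcons belast_rcons rev_cons.
  by apply: sub_path => a b /=; rewrite esym.
apply: (negP (acyclic x (take i.+1 p ++ rev (take k q)))); apply/and4P; split.
- rewrite cat_path take_path //= ltw.
  by move: revq; rewrite rcons_path => /andP[].
- rewrite /= mem_cat negb_or mem_rev.
  rewrite (contraNF (@mem_take _ _ _ _) xNp) (contraNF (@mem_take _ _ _ _) xNq) /=.
  rewrite cat_uniq rev_uniq !take_uniq //= andbT.
  apply/hasP => -[y]; rewrite mem_rev => yk.
  rewrite (take_nth x ip) mem_rcons inE => /orP[/eqP yw|yi].
    by move: yk; rewrite yw in_take // ltnn.
  have : has (mem q) (take i p) by apply/hasP; exists y => //; exact: mem_take yk.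
  by rewrite has_take // ltnn.
- rewrite size_cat size_rev (size_takel ip) (size_takel (ltnW kq)).
  rewrite addSn ltnS addn_gt0; case: (posnP i) => [i0|//]; rewrite lt0n /=.
  apply: contra hpq => /eqP k0.
  by rewrite -!nth0 -[in nth x q _]k0 nth_index // /w i0.
- by rewrite last_cat ltw; move: revq; rewrite rcons_path => /andP[_].
Qed.

Lemma upath_unique x p q :
  path e x p -> path e x q -> uniq (x :: p) -> uniq (x :: q) ->
  last x p = last x q -> p = q.
Proof.
elim: p x q => [|a p IH] x [|b q] //=.
- by move=> _ _ _ /andP[xq _] lq; move: xq; rewrite lq mem_last.
- by move=> _ _ /andP[xp _] _ lq; move: xp; rewrite -lq mem_last.
move=> /andP[xa pa] /andP[xb qb] /andP[xNp up] /andP[xNq uq] l.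
have ab : a = b.
  by apply: (@upaths_head_eq x (a :: p) (b :: q)); rewrite //= ?xa ?xb ?xNp ?xNq.
by subst b; rewrite (IH a q).
Qed.

Hypothesis connected : forall x y, connect e x y.

Lemma exists_upath x y : exists p, [&& path e x p, uniq (x :: p) & last x p == y].
Proof.
have /connectP[p /shortenP[p' pp' up' _] ->] := connected x y.
by exists p'; rewrite pp' up' eqxx.
Qed.

Definition tpath x y := xchoose (exists_upath x y).

Definition tdist x y := size (tpath x y).

Definition tparent r w := last r (belast r (tpath r w)).

Lemma tpath_path x y : path e x (tpath x y).
Proof. by case/and3P: (xchooseP (exists_upath x y)). Qed.

Lemma tpath_uniq x y : uniq (x :: tpath x y).
Proof. by case/and3P: (xchooseP (exists_upath x y)). Qed.

Lemma tpath_last x y : last x (tpath x y) = y.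
Proof. by case/and3P: (xchooseP (exists_upath x y)) => _ _ /eqP. Qed.

Lemma upath_tpath x y p : path e x p -> uniq (x :: p) -> last x p = y -> p = tpath x y.
Proof.
move=> pp up lp; apply: upath_unique pp (tpath_path x y) up (tpath_uniq x y) _.
by rewrite lp tpath_last.
Qed.

Lemma tpath_refl r : tpath r r = [::].
Proof. by symmetry; apply: upath_tpath. Qed.

Lemma tdist_refl r : tdist r r = 0.
Proof. by rewrite /tdist tpath_refl. Qed.

Lemma tdist_lt_card x y : tdist x y < #|T|.
Proof.
have /card_uniqP := tpath_uniq x y.
by have := max_card (mem (x :: tpath x y)) => /[swap] ->.
Qed.

Lemma tpath_rev x y : tpath y x = rev (belast x (tpath x y)).
Proof.
have key : y :: rev (belast x (tpath x y)) = rev (x :: tpath x y).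
  by rewrite [x :: tpath x y]lastI rev_rcons tpath_last.
symmetry; apply: upath_tpath.
- rewrite -[y in path e y _](tpath_last x y) rev_path.
  by apply: sub_path (tpath_path x y) => a b /=; rewrite esym.
- by rewrite key rev_uniq tpath_uniq.
- by rewrite -[LHS]/(last y (y :: _)) key rev_cons last_rcons.
Qed.

Lemma tdistC x y : tdist x y = tdist y x.
Proof. by rewrite /tdist tpath_rev size_rev size_belast. Qed.

Lemma mem_tpathC x y z : (z \in y :: tpath y x) = (z \in x :: tpath x y).
Proof.
by rewrite tpath_rev [x :: _]lastI tpath_last mem_rcons !inE mem_rev.
Qed.

Lemma tpath_rcons r w : w != r -> tpath r w = rcons (tpath r (tparent r w)) w.
Proof.
move=> wr; rewrite /tparent.
have := tpath_path r w; have := tpath_uniq r w; have := tpath_last r w.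
case/lastP: (tpath r w) => [/= rw|p z]; first by rewrite rw eqxx in wr.
rewrite last_rcons belast_rcons => -> up pp; congr rcons; apply: upath_tpath => //.
- by move: pp; rewrite rcons_path => /andP[].
- by move: up; rewrite -rcons_cons rcons_uniq => /andP[].
Qed.

Lemma tparent_edge r w : w != r -> e (tparent r w) w.
Proof.
move=> wr; have := tpath_path r w.
by rewrite (tpath_rcons wr) rcons_path tpath_last => /andP[].
Qed.

Lemma tdist_tparent r w : w != r -> tdist r w = (tdist r (tparent r w)).+1.
Proof. by move=> wr; rewrite /tdist {1}(tpath_rcons wr) size_rcons. Qed.

Lemma tdist_mem_tpath r v w : w \in r :: tpath r v -> (tdist r w < tdist r v) || (w == v).
Proof.
move=> wP; set j := index w (r :: tpath r v).
have jP : j <= size (tpath r v) by rewrite -ltnS index_mem.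
rewrite /tdist; have -> : tpath r w = take j (tpath r v).
  symmetry; apply: upath_tpath.
  - exact: take_path (tpath_path r v).
  - exact: take_uniq j.+1 (tpath_uniq r v).
  - by rewrite last_take_nth // nth_index.
rewrite (size_takel jP) ltn_neqAle jP andbT.
case: eqP => //= jE; apply/eqP.
by rewrite -(nth_index r wP) -/j -last_take_nth // jE take_size tpath_last.
Qed.

Definition tchild r v w := (w != r) && (tparent r w == v).

Lemma tchild_ext r v w : e v w -> w \notin r :: tpath r v -> tchild r v w.
Proof.
move=> evw wN.
have E : tpath r w = rcons (tpath r v) w.
  symmetry; apply: upath_tpath; last by rewrite last_rcons.
  - by rewrite rcons_path tpath_path tpath_last.
  - by rewrite -rcons_cons rcons_uniq wN tpath_uniq.
apply/andP; split; first by apply: contra wN => /eqP ->; rewrite mem_head.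
by rewrite /tparent E belast_rcons /= tpath_last.
Qed.

Lemma edge_tchild r v w : e v w -> tchild r v w || tchild r w v.
Proof.
move=> evw; case: (boolP (w \in r :: tpath r v)) => wP; last by rewrite tchild_ext.
have wv : w != v by apply: contraTneq evw => ->; rewrite eirr.
suff vN : v \notin r :: tpath r w by rewrite (@tchild_ext r w v) ?orbT // esym.
apply/negP => /tdist_mem_tpath; have := tdist_mem_tpath wP.
by rewrite (negbTE wv) eq_sym (negbTE wv) !orbF => /ltn_trans/[apply]; rewrite ltnn.
Qed.

Lemma tchild_asym r v w : tchild r v w -> ~~ tchild r w v.
Proof.
move=> /andP[wr /eqP pw]; apply/negP => /andP[vr /eqP pv].
by have := tdist_tparent wr; have := tdist_tparent vr; rewrite pw pv; lia.
Qed.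

Lemma edge_tchildE r v w : (e v w : nat) = tchild r v w + tchild r w v.
Proof.
case: (boolP (e v w)) => [evw|Nevw].
  by case/orP: (edge_tchild r evw) => h; rewrite h (negbTE (tchild_asym h)).
suff /norP[/negbTE-> /negbTE->] : ~~ (tchild r v w || tchild r w v) by [].
apply: contra Nevw => /orP[] /andP[xr /eqP <-]; first exact: tparent_edge.
by rewrite esym tparent_edge.
Qed.

Lemma distG_tdist x y : distG e x y = Some (tdist x y).
Proof.
rewrite /distG.
suff [h1 h2] : walk_len e x y (tdist x y) /\ (forall j, j < tdist x y -> ~~ walk_len e x y j).
  by have /andP[-> /eqP ->] := find_iota_first (tdist_lt_card x y) h1 h2.
split.
  by apply/existsP; exists (in_tuple (tpath x y)); rewrite /= tpath_path tpath_last eqxx.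
move=> j jd; apply/existsP => -[t /andP[/shortenP[p pp up sub] /eqP lp]].
have tp := upath_tpath pp up lp; subst p.
have : size (tpath x y) <= size t by apply: uniq_leq_size sub; case/andP: up.
by rewrite size_tuple leqNgt jd.
Qed.

Lemma Dpath_len_tpath (D : {set T}) u v k : Dpath_len e D u v k ->
  k = tdist u v /\ all (fun x => x \notin D) (behead (belast u (tpath u v))).
Proof.
move=> /existsP[t /and5P[tp /eqP tl tu _ a]].
by rewrite -(upath_tpath tp tu tl) /tdist -(upath_tpath tp tu tl) size_tuple.
Qed.

Lemma distGD_tdist (D : {set T}) u v :
  distGD e D u v = None \/ distGD e D u v = Some (tdist u v).
Proof.
rewrite /distGD; case: ifP => h; [right | by left].
have := h; rewrite has_find size_iota => hf.
by have := nth_find 0 h; rewrite nth_iota // add0n => /Dpath_len_tpath[<-].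
Qed.

Lemma distGD_blocked (D : {set T}) u v z :
  z \in D -> z \in behead (belast u (tpath u v)) -> distGD e D u v = None.
Proof.
move=> zD zP; rewrite /distGD; case: ifP => // h.
have /Dpath_len_tpath[_ /allP /(_ z zP)] := nth_find 0 h.
by rewrite zD.
Qed.

Definition deg v := #|[set w | e v w]|.

Lemma sum_tchild (R : nzRingType) r w (F : T -> R) :
  (\sum_v (tchild r v w : nat)%:R * F v = (w != r : nat)%:R * F (tparent r w))%R.
Proof.
rewrite (bigD1 (tparent r w)) //= /tchild eqxx andbT big1 ?addr0 // => v vp.
by rewrite eq_sym in vp; rewrite (negbTE vp) andbF mul0r.
Qed.

Lemma sum_deg_tparent (R : nzRingType) r (f : T -> R) :
  (\sum_v (deg v)%:R * f v = \sum_(w | w != r) (f (tparent r w) + f w))%R.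
Proof.
have degE v : ((deg v)%:R * f v = \sum_w (tchild r v w : nat)%:R * f v
                                 + \sum_w (tchild r w v : nat)%:R * f v)%R.
  rewrite /deg -sum1_card big_mkcond natr_sum mulr_suml -big_split /=.
  by apply: eq_bigr => w _; rewrite in_set -mulrDl -natrD -edge_tchildE; case: (e v w).
rewrite (eq_bigr _ (fun v _ => degE v)) big_split /= exchange_big /=.
under eq_bigr do rewrite sum_tchild.
under [X in (_ + X)%R]eq_bigr do rewrite (sum_tchild _ _ (fun _ => f _)).
rewrite -big_split /= [RHS]big_mkcond /=; apply: eq_bigr => w _.
by case: (w != r); rewrite /= ?mul1r ?mul0r ?addr0.
Qed.

Lemma exists_leaf_beyond r u : u != r -> 1 < deg u ->
  exists v, [/\ deg v <= 1, u \in tpath r v & v != u].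
Proof.
move=> ur du.
have Su : u \in tpath r u by rewrite (tpath_rcons ur) mem_rcons mem_head.
case: (@arg_maxnP T u (fun v => u \in tpath r v) (tdist r) Su) => v Sv vmax.
have nbr w : e v w -> tparent r v = w.
  move=> evw; case/orP: (edge_tchild r evw) => /andP[wr /eqP pw] //.
  have Sw : u \in tpath r w by rewrite (tpath_rcons wr) pw mem_rcons inE Sv orbT.
  by have /= := vmax w Sw; rewrite (tdist_tparent wr) pw ltnn.
have dv : deg v <= 1.
  rewrite /deg -(cards1 (tparent r v)); apply: subset_leq_card; apply/subsetP => w.
  by rewrite !inE => /nbr <-.
by exists v; split => //; apply: contraTneq dv => ->; rewrite -ltnNge.
Qed.

Lemma isK13_center c : #|T| = 4 -> deg c = 3 -> isK13 e.
Proof.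
move=> nT dc; split => //; exists c => x y.
have cN : c \notin [set w | e c w] by rewrite inE eirr.
have Nfull : c |: [set w | e c w] = [set: T].
  by apply/eqP; rewrite eqEcard subsetT cardsT cardsU1 cN -/(deg c) dc nT.
have ecz z : z != c -> e c z.
  by move=> zc; have := in_setT z; rewrite -Nfull !inE (negbTE zc).
case: (eqVneq x c) => [->|xc]; case: (eqVneq y c) => [->|yc] /=.
- by rewrite eirr.
- by rewrite ecz.
- by rewrite esym ecz.
apply/negP => exy; apply: (negP (acyclic c [:: x; y])).
have xy : x != y by apply: contraTneq exy => ->; rewrite eirr.
by rewrite /is_cycle /= ecz // exy esym ecz //= !inE negb_or !(eq_sym c) xc yc xy.
Qed.

Local Open Scope ring_scope.

Lemma sum_deg (R : nzRingType) :
  (0 < #|T|)%N -> \sum_v (deg v)%:R = 2%:R * (#|T|%:R - 1) :> R.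
Proof.
move=> T0; have [r _] := card_gt0P T0.
have := sum_deg_tparent r (fun=> 1 : R); rewrite (eq_bigr _ (fun v _ => mulr1 _)) => ->.
rewrite sumr_const -(prednK T0) -[(#|T|.-1.+1)%:R]natr1 addrK -(cardC1 r).
by rewrite mulr_natl -mulr2n mulrnAC.
Qed.

Lemma sum_deficit_invpow2 (R : numFieldType) r :
  \sum_v (3%:R - (deg v)%:R) / 2%:R ^+ tdist r v = 3%:R :> R.
Proof.
have pow2_neq0 k : 2%:R ^+ k != 0 :> R by rewrite expf_neq0 ?pnatr_eq0.
have pair w : w != r -> (2%:R ^+ tdist r (tparent r w))^-1 + (2%:R ^+ tdist r w)^-1
                        = 3%:R / 2%:R ^+ tdist r w :> R.
  by move=> wr; rewrite [tdist r w](tdist_tparent wr) exprS; field.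
under eq_bigr do rewrite mulrBl.
rewrite sumrB (sum_deg_tparent r (fun v => (2%:R ^+ tdist r v)^-1)) (bigD1 r) //=.
by rewrite tdist_refl expr0 divr1 (eq_bigr _ pair) addrK.
Qed.

Definition deg_weight (R : realFieldType) v : R := (3%:R - (deg v)%:R) / 6%:R.

Lemma sum_deg_weight_halfpow (R : realFieldType) r :
  \sum_v deg_weight R v * halfpow R (distG e r v) = 1.
Proof.
transitivity ((3%:R : R)^-1 * \sum_v (3%:R - (deg v)%:R) / 2%:R ^+ tdist r v); last first.
  by rewrite sum_deficit_invpow2 mulVf ?pnatr_eq0.
rewrite mulr_sumr; apply: eq_bigr => v _; rewrite distG_tdist /deg_weight /=.
by field; rewrite expf_neq0 ?pnatr_eq0.
Qed.

Lemma sum_deg_weight (R : realFieldType) :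
  (0 < #|T|)%N -> \sum_v deg_weight R v = (#|T|%:R + 2%:R) / 6%:R.
Proof.
move=> T0; rewrite -mulr_suml sumrB sum_deg // sumr_const -mulr_natr.
by congr (_ / _); ring.
Qed.

Hypothesis subc : subcubic e.

Lemma deg_weight_ge0 (R : realFieldType) v : 0 <= deg_weight R v.
Proof. by rewrite divr_ge0 ?ler0n // subr_ge0 ler_nat subc. Qed.

Lemma deg_weight_feasible (R : realFieldType) : fpe_feasible e (deg_weight R).
Proof.
split=> [|v]; first exact: deg_weight_ge0.
rewrite (eq_bigr (fun u => deg_weight R u * halfpow R (distG e v u))).
  by rewrite sum_deg_weight_halfpow.
by move=> u _; rewrite !distG_tdist tdistC mulrC.
Qed.

(* Weak LP duality, with deg_weight as the dual certificate: the LP matrix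
   is symmetric and deg_weight solves its dual with equality. *)
Lemma fpe_feasible_ge (R : realFieldType) x :
  (0 < #|T|)%N -> fpe_feasible e x -> (#|T|%:R + 2%:R) / 6%:R <= \sum_u x u :> R.
Proof.
move=> T0 [x_ge0 x_cover]; rewrite -sum_deg_weight //.
under [X in _ <= X]eq_bigr => u _ do rewrite -[x u]mul1r -(sum_deg_weight_halfpow R u) mulr_suml.
rewrite exchange_big /=; apply: ler_sum => v _.
under eq_bigr do rewrite -mulrA; rewrite -mulr_sumr.
by rewrite -[X in X <= _]mulr1 ler_wpM2l ?deg_weight_ge0.
Qed.

Lemma fpe_opt_value (R : realFieldType) (opt : R) :
  (0 < #|T|)%N -> is_fpe_opt e opt -> opt = (#|T|%:R + 2%:R) / 6%:R.
Proof.
move=> T0 [[x [x_feas <-]] opt_min].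
apply/eqP; rewrite eq_le (fpe_feasible_ge T0 x_feas) andbT -(sum_deg_weight R T0).
exact: opt_min (deg_weight_feasible R).
Qed.

Definition pweight (D : {set T}) v : rat := \sum_(u in D) halfpow rat (distG e u v).

Lemma halfpow_distGD_le (D : {set T}) v u :
  halfpow rat (distGD e D v u) <= halfpow rat (distG e u v).
Proof.
case: (distGD_tdist D v u) => ->; first exact: halfpow_ge0.
by rewrite distG_tdist tdistC.
Qed.

Lemma wGD_le_pweight (D : {set T}) v : wGD e D v <= pweight D v.
Proof. by apply: ler_sum => u _; exact: halfpow_distGD_le. Qed.

Lemma sum_deg_weight_pweight (D : {set T}) : \sum_v deg_weight rat v * pweight D v = #|D|%:R.
Proof.
under eq_bigr do rewrite mulr_sumr; rewrite exchange_big /=.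
under eq_bigr do rewrite sum_deg_weight_halfpow.
by rewrite sumr_const.
Qed.

Section TightDominating.
Variable D : {set T}.
Hypothesis D_dom : exp_dominating e D.
Hypothesis D_card : (6 * #|D| = #|T| + 2)%N.

Let D_cover u : 1 <= wGD e D u := forallP D_dom u.

Lemma tight_card_gt0 : (0 < #|D|)%N.
Proof. by rewrite -(ltn_pmul2l (isT : (0 < 6)%N)) muln0 D_card addn2. Qed.

Lemma complementary_slackness v : deg_weight rat v * (pweight D v - 1) = 0.
Proof.
have slack_ge0 u : 0 <= deg_weight rat u * (pweight D u - 1).
  by rewrite mulr_ge0 ?deg_weight_ge0 // subr_ge0 (le_trans (D_cover u)) ?wGD_le_pweight.
have T0 : (0 < #|T|)%N := leq_trans tight_card_gt0 (max_card _).
apply: (@psumr_eq0P _ _ predT (fun u => _ * (_ - 1)) (fun u _ => slack_ge0 u)) => //.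
under eq_bigr do rewrite mulrBr mulr1.
rewrite sumrB sum_deg_weight_pweight sum_deg_weight // -natrD -D_card natrM.
by rewrite mulrAC divff ?mul1r ?subrr ?pnatr_eq0.
Qed.

Lemma pweight_tight v : (deg v <= 2)%N -> pweight D v = 1.
Proof.
move=> dv; have /eqP := complementary_slackness v.
rewrite mulf_eq0 subr_eq0 => /orP[|/eqP //].
rewrite mulf_eq0 invr_eq0 pnatr_eq0 orbF subr_eq0 eqr_nat => /eqP d3.
by rewrite -d3 in dv.
Qed.

Lemma wGD_tight v : (deg v <= 2)%N -> wGD e D v = 1.
Proof.
move=> dv; apply/eqP; rewrite eq_le D_cover andbT.
by rewrite -(pweight_tight dv) wGD_le_pweight.
Qed.

Lemma distGD_tight v u : (deg v <= 2)%N -> u \in D ->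
  halfpow rat (distGD e D v u) = halfpow rat (distG e u v).
Proof.
move=> dv uD; apply/eqP; rewrite eq_sym -subr_eq0; apply/eqP; move: u uD.
apply: (@psumr_eq0P _ _ (mem D) (fun u => _ - _)) => [u _|].
  by rewrite subr_ge0 halfpow_distGD_le.
by rewrite sumrB -/(pweight D v) -/(wGD e D v) pweight_tight // wGD_tight // subrr.
Qed.

Lemma tight_deg3 u : u \in D -> deg u = 3.
Proof.
move=> uD; apply/eqP; rewrite eqn_leq subc /= leqNgt; apply/negP => du.
have : halfpow rat (distG e u u) <= pweight D u.
  by rewrite /pweight (bigD1 u) //= lerDl sumr_ge0 // => *; exact: halfpow_ge0.
by rewrite pweight_tight // distG_tdist tdist_refl /= expr0 divr1; lra.
Qed.

(* A leaf v beyond u1 as seen from u2 is blocked from u2 by u1, yet tightness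
   demands that v sees u2 at its full distance. *)
Lemma tight_card1 : #|D| = 1%N.
Proof.
apply/eqP; rewrite eqn_leq tight_card_gt0 andbT leqNgt.
apply/negP => /card_gt1P[u1 [u2 [u1D u2D u12]]].
have [v [dv u1v vu1]] : exists v, [/\ (deg v <= 1)%N, u1 \in tpath u2 v & v != u1].
  by apply: exists_leaf_beyond u12 _; rewrite tight_deg3.
have := distGD_tight (leq_trans dv (isT : (1 <= 2)%N)) u2D.
rewrite (@distGD_blocked D v u2 u1) //; last first.
  apply: mem_behead_belast; last by rewrite tpath_last.
    by rewrite mem_tpathC inE u1v orbT.
  by rewrite eq_sym.
by rewrite distG_tdist /= => /eqP; rewrite eq_sym mulf_eq0 invr_eq0 expf_eq0 !pnatr_eq0 andbF.
Qed.

Lemma tight_isK13 : isK13 e.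
Proof.
have /eqP/cards1P[c Dc] := tight_card1.
apply: (@isK13_center c); first by move: D_card; rewrite tight_card1; lia.
by rewrite tight_deg3 // Dc set11.
Qed.

End TightDominating.

End Trees.

Section ExpDomination.
Variables (T : finType) (e : rel T).
Local Open Scope ring_scope.

Lemma distGD_self (D : {set T}) u : u \in D -> distGD e D u u = Some 0%N.
Proof.
move=> uD; rewrite /distGD.
have T0 : (0 < #|T|)%N by apply/card_gt0P; exists u.
suff P0 : Dpath_len e D u u 0.
  have P0_first j : (j < 0)%N -> ~~ Dpath_len e D u u j by [].
  by have /andP[-> /eqP ->] := find_iota_first T0 P0 P0_first.
apply/existsP; exists [tuple] => /=.
by rewrite setUid eqxx (setIidPl _) ?cards1 // sub1set.
Qed.

Lemma wGD_self (D : {set T}) u : u \in D -> 2%:R <= wGD e D u.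
Proof.
move=> uD; rewrite /wGD (bigD1 u) //= distGD_self //= expr0 divr1 lerDl.
by apply: sumr_ge0 => v _; exact: halfpow_ge0.
Qed.

Lemma exp_dominating_setT : exp_dominating e [set: T].
Proof. by apply/forallP => u; apply: le_trans (wGD_self (in_setT u)); rewrite ler1n. Qed.

Lemma gamma_e_witness : exists2 D : {set T}, #|D| = gamma_e e & exp_dominating e D.
Proof.
set P := fun k => [exists D : {set T}, (#|D| == k) && exp_dominating e D].
have hP : has P (iota 0 #|T|.+1).
  apply/hasP; exists #|T|; first by rewrite mem_iota add0n ltnSn.
  by apply/existsP; exists [set: T]; rewrite cardsT eqxx exp_dominating_setT.
have := nth_find 0%N hP; rewrite -/(gamma_e e).
have := hP; rewrite has_find size_iota => hf.
by rewrite nth_iota // add0n => /existsP[D /andP[/eqP]]; exists D.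
Qed.

Lemma distGD_edge_set1 u c : e u c -> u != c -> distGD e [set c] u c = Some 1%N.
Proof.
move=> euc uc; rewrite /distGD.
have P1 : Dpath_len e [set c] u c 1.
  apply/existsP; exists [tuple c] => /=.
  by rewrite euc eqxx inE (negbTE uc) andbT (setIidPr _) ?cards1 // sub1set !inE eqxx orbT.
have P0 j : (j < 1)%N -> ~~ Dpath_len e [set c] u c j.
  rewrite ltnS leqn0 => /eqP ->; apply/existsP => -[t /and5P[_ /eqP]].
  by rewrite (tuple0 t) /= => ucE; rewrite ucE eqxx in uc.
have T1 : (1 < #|T|)%N by apply/card_gt1P; exists u, c.
by have /andP[-> /eqP ->] := find_iota_first T1 P1 P0.
Qed.

Lemma gamma_e_K13 : isK13 e -> gamma_e e = 1%N.
Proof.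
move=> [nT [c ec]].
have c_dom : exp_dominating e [set c].
  apply/forallP => u; case: (eqVneq u c) => [->|uc].
    by apply: le_trans (wGD_self (set11 c)); rewrite ler1n.
  have euc : e u c by rewrite ec eqxx uc orbT.
  by rewrite /wGD big_set1 distGD_edge_set1 //= expr1 divff // pnatr_eq0.
have P1 : [exists D : {set T}, (#|D| == 1%N) && exp_dominating e D].
  by apply/existsP; exists [set c]; rewrite cards1 eqxx c_dom.
have P0 j : (j < 1)%N -> ~~ [exists D : {set T}, (#|D| == j) && exp_dominating e D].
  rewrite ltnS leqn0 => /eqP ->; apply/existsP => -[D /andP[/eqP D0 /forallP /(_ c)]].
  by move/eqP: D0; rewrite cards_eq0 => /eqP ->; rewrite /wGD big_set0 ler10.
have T1 : (1 < #|T|.+1)%N by rewrite nT.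
by have /andP[_ /eqP] := find_iota_first T1 P1 P0.
Qed.

End ExpDomination.

Theorem theorem4 (T : finType) (e : rel T) (R : realFieldType) (opt : R) :
  symmetric e -> irreflexive e -> is_tree e -> subcubic e ->
  is_fpe_opt e opt ->
  (((gamma_e e)%:R)%R = opt <-> isK13 e).
Proof.
move=> esym eirr [T0 [connected acyclic]] subc.
move=> /(fpe_opt_value esym eirr acyclic connected subc T0) ->.
split => [gamma_opt | K13].
- have [D D_card D_dom] := gamma_e_witness e.
  apply: (tight_isK13 esym eirr acyclic connected subc D_dom).
  apply/eqP; rewrite -(eqr_nat R) natrM natrD D_card gamma_opt.
  by apply/eqP; field.
- by rewrite gamma_e_K13 //; case: K13 => -> _; field.
Qed.
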